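(* Let $q\ge2$ be a prime power and $n,d$ positive integers with $d<\frac{n+1}{2}$. For $0\le i\le d$ let $m_i={n\brack i}_q-{n\brack i-1}_q$ (with ${n\brack -1}_q=0$) be the multiplicities of the Grassmann scheme $Gr(n,d)$ over $\mathbb{F}_q$. Then $m_i^2\ge m_{i-1}m_{i+1}$ for all $1\le i\le d-1$.
   Context: ${n\brack i}_q=\prod_{t=0}^{i-1}\frac{q^{n-t}-1}{q^{i-t}-1}$ is the Gaussian binomial coefficient (number of $i$-dimensional subspaces of $\mathbb{F}_q^n$). The Grassmann scheme $Gr(n,d)$ is the association scheme on the $d$-dimensional subspaces of $\mathbb{F}_q^n$, with relations given by the dimension of the intersection; in the standard ($Q$-polynomial) ordering its multiplicities are $m_i={n\brack i}_q-{n\brack i-1}_q$, $0\le i\le d$. *)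

From mathcomp Require Import all_boot all_order all_algebra.
Set Implicit Arguments. Unset Strict Implicit. Unset Printing Implicit Defensive.
Import Order.TTheory GRing.Theory Num.Theory.
Local Open Scope ring_scope.

Definition gauss_binom (q n i : nat) : rat :=
  \prod_(t < i) (((q ^ (n - t))%:R - 1) / ((q ^ (i - t))%:R - 1)).

Definition grass_mult (q n i : nat) : rat :=
  gauss_binom q n i - (if i is j.+1 then gauss_binom q n j else 0).

Definition prime_power (q : nat) : Prop :=
  exists p k : nat, prime p /\ (0 < k)%N /\ q = (p ^ k)%N.

(* Write m_i = [n i]_q * c_i with c_i = 1 - [n i-1]_q / [n i]_q
   = q^i (q^(n-2i+1) - 1) / (q^(n-i+1) - 1).  Both factors are nonnegative and
   log-concave, hence so is their product.  For the Gaussian binomials this is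
   because the ratio [n i+1]_q / [n i]_q = (q^(n-i) - 1) / (q^(i+1) - 1) decreases
   in i; for c_i the power q^i is log-linear and the remaining quotient is
   log-concave because t |-> log (q^t - 1) is concave with curvature decreasing
   in t, so that the step-2 second difference in the numerator dominates the
   step-1 second difference in the denominator (this needs 2i < n). *)

From mathcomp Require Import all_boot all_order all_algebra.
From mathcomp Require Import ring lra zify.
Set Implicit Arguments. Unset Strict Implicit. Unset Printing Implicit Defensive.
Import Order.TTheory GRing.Theory Num.Theory.
Local Open Scope ring_scope.

Section ExpMinusOne.

Variable R : realFieldType.
Implicit Types x : R.

Lemma expm1_ge0 x k : 1 <= x -> 0 <= x ^+ k - 1.
Proof. by move=> x_ge1; rewrite subr_ge0 exprn_ege1. Qed.

Lemma expm1_gt0 x k : 1 < x -> 0 < x ^+ k.+1 - 1.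
Proof. by move=> x_gt1; rewrite subr_gt0 exprn_egt1. Qed.

Lemma ler_expm1 x j k : 1 <= x -> (j <= k)%N -> x ^+ j - 1 <= x ^+ k - 1.
Proof. by move=> x_ge1 le_jk; rewrite lerD2r ler_weXn2l. Qed.

Lemma expm1_sqr_mulX_le x j k : 1 <= x -> (j <= k)%N ->
  (x ^+ j - 1) ^+ 2 * x ^+ k <= (x ^+ k - 1) ^+ 2 * x ^+ j.
Proof.
move=> x_ge1 /subnKC <-; set s := (k - j)%N.
have x_ge0 : 0 <= x by lra.
rewrite -subr_ge0 !exprD.
have -> : (x ^+ j * x ^+ s - 1) ^+ 2 * x ^+ j - (x ^+ j - 1) ^+ 2 * (x ^+ j * x ^+ s)
    = x ^+ j * (x ^+ s - 1) * (x ^+ j * x ^+ j * x ^+ s - 1) by ring.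
rewrite !mulr_ge0 ?exprn_ge0 ?expm1_ge0 //.
by rewrite subr_ge0 !mulr_ege1 ?exprn_ege1.
Qed.

(* The logarithmic second difference of [t |-> x ^+ t - 1] shrinks as [t] grows,
   so the one of step 2 centred at [K.+2] beats the one of step 1 centred at [L.+1]. *)
Lemma expm1_log_concave_step2_step1 x K L : 1 <= x -> (K < L)%N ->
  (x ^+ K.+4 - 1) * (x ^+ K - 1) * (x ^+ L.+1 - 1) ^+ 2
    <= (x ^+ K.+2 - 1) ^+ 2 * ((x ^+ L.+2 - 1) * (x ^+ L - 1)).
Proof.
move=> x_ge1 lt_KL.
have x_gt0 : 0 < x by lra.
have := expm1_sqr_mulX_le (j := K.+2) (k := L.+1) x_ge1 lt_KL.
rewrite !(exprSr x); set a := x ^+ K; set b := x ^+ L => key.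
have a_ge0 : 0 <= a by rewrite exprn_ge0 ?ltW.
have key' : (a * x * x - 1) ^+ 2 * b <= (b * x - 1) ^+ 2 * a * x.
  by rewrite -(ler_pM2r x_gt0); move: key; congr (_ <= _); ring.
rewrite -subr_ge0.
have -> : (a * x * x - 1) ^+ 2 * ((b * x * x - 1) * (b - 1))
          - (a * x * x * x * x - 1) * (a - 1) * (b * x - 1) ^+ 2
    = a * (x ^+ 2 - 1) ^+ 2 * (b * x - 1) ^+ 2 - (a * x * x - 1) ^+ 2 * b * (x - 1) ^+ 2
  by ring.
rewrite subr_ge0; apply: (le_trans (ler_wpM2r (sqr_ge0 (x - 1)) key')).
have -> : a * (x ^+ 2 - 1) ^+ 2 * (b * x - 1) ^+ 2
    = (b * x - 1) ^+ 2 * a * (x + 1) ^+ 2 * (x - 1) ^+ 2 by ring.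
apply: ler_wpM2r; first exact: sqr_ge0.
apply: ler_wpM2l; first by rewrite mulr_ge0 ?sqr_ge0.
nra.
Qed.

End ExpMinusOne.

Definition log_concave_at (R : numDomainType) (u : nat -> R) (i : nat) : bool :=
  u i.-1 * u i.+1 <= u i ^+ 2.

Lemma log_concave_atM (R : numDomainType) (u v : nat -> R) i :
  0 <= u i.-1 * u i.+1 -> 0 <= v i.-1 * v i.+1 ->
  log_concave_at u i -> log_concave_at v i ->
  log_concave_at (fun k => u k * v k) i.
Proof.
rewrite /log_concave_at => u_ge0 v_ge0 lc_u lc_v.
by rewrite mulrACA exprMn ler_pM.
Qed.

Section GaussianBinomial.

Variable q : nat.
Local Notation x := (q%:R : rat).

Lemma gauss_binomE n i : gauss_binom q n i =
  (\prod_(t < i) (x ^+ (n - t) - 1)) / \prod_(t < i) (x ^+ t.+1 - 1).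
Proof.
rewrite /gauss_binom big_split /= prodfV; congr (_ * _^-1).
  by apply: eq_bigr => t _; rewrite natrX.
rewrite (reindex_inj rev_ord_inj) /=; apply: eq_bigr => t _.
by rewrite natrX subKn.
Qed.

Lemma gauss_binomS n j : gauss_binom q n j.+1 =
  gauss_binom q n j * ((x ^+ (n - j) - 1) / (x ^+ j.+1 - 1)).
Proof. by rewrite !gauss_binomE !big_ord_recr /= invfM mulrACA. Qed.

Lemma gauss_binom_ge0 n i : (0 < q)%N -> 0 <= gauss_binom q n i.
Proof.
move=> q_gt0; have x_ge1 : 1 <= x by rewrite ler1n.
by rewrite gauss_binomE divr_ge0 //; apply: prodr_ge0 => t _; exact: expm1_ge0.
Qed.

Hypothesis q_gt1 : (1 < q)%N.

Let x_gt1 : 1 < x. Proof. by rewrite ltr1n. Qed.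
Let x_ge1 : 1 <= x. Proof. exact: ltW. Qed.

Lemma gauss_binom_log_concave n i : (0 < i)%N -> log_concave_at (gauss_binom q n) i.
Proof.
case: i => // j _; rewrite /log_concave_at /= !gauss_binomS.
set B := gauss_binom q n j.
set r0 := (x ^+ (n - j) - 1) / (x ^+ j.+1 - 1).
set r1 := (x ^+ (n - j.+1) - 1) / (x ^+ j.+2 - 1).
have r0_ge0 : 0 <= r0 by rewrite divr_ge0 ?expm1_ge0.
have r1_le_r0 : r1 <= r0.
  apply: ler_pM; rewrite ?expm1_ge0 ?invr_ge0 ?expm1_ge0 //.
    by rewrite ler_expm1 // leq_sub2l.
  by rewrite lef_pV2 ?posrE ?expm1_gt0 // ler_expm1.
have -> : B * (B * r0 * r1) = B ^+ 2 * r0 * r1 by ring.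
have -> : (B * r0) ^+ 2 = B ^+ 2 * r0 * r0 by ring.
by rewrite ler_wpM2l // mulr_ge0 ?sqr_ge0.
Qed.

End GaussianBinomial.

Section GrassmannRatio.

Variable R : realFieldType.
Implicit Types x : R.

Definition grass_ratio x n i : R := 1 - (x ^+ i - 1) / (x ^+ (n - i).+1 - 1).

Lemma grass_ratioE x n i t : 1 < x -> (n - i).+1 = (i + t)%N ->
  grass_ratio x n i = x ^+ i * (x ^+ t - 1) / (x ^+ (i + t) - 1).
Proof.
move=> x_gt1 e; rewrite /grass_ratio e.
have : x ^+ (i + t) - 1 != 0 by rewrite -e gt_eqF ?expm1_gt0.
by rewrite exprD => nz; field.
Qed.

Lemma grass_ratio_ge0 x n i : 1 < x -> (i <= (n - i).+1)%N -> 0 <= grass_ratio x n i.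
Proof.
move=> x_gt1 le_i; rewrite subr_ge0 ler_pdivrMr ?expm1_gt0 // mul1r.
by rewrite ler_expm1 ?ltW.
Qed.

Lemma grass_ratio_log_concave x n i : 1 < x -> (0 < i)%N -> (i.*2 < n)%N ->
  log_concave_at (grass_ratio x n) i.
Proof.
move=> x_gt1; case: i => // j _ lt_n; rewrite /log_concave_at /=.
have [s ->] : exists s, n = (s + j.*2 + 3)%N by exists (n - (j.*2 + 3))%N; lia.
set L := (j + s).+2.
rewrite (grass_ratioE (i := j) (t := s.+4)) ?(grass_ratioE (i := j.+1) (t := s.+2))
  ?(grass_ratioE (i := j.+2) (t := s)) //; try lia.
rewrite !addnS !addSn -/L (exprS x j.+1) (exprS x j).
have fL0 : 0 < x ^+ L - 1 by rewrite expm1_gt0.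
have fL1 : 0 < x ^+ L.+1 - 1 by rewrite expm1_gt0.
have fL2 : 0 < x ^+ L.+2 - 1 by rewrite expm1_gt0.
have lt_sL : (s < L)%N by rewrite /L; lia.
have key := expm1_log_concave_step2_step1 (ltW x_gt1) lt_sL.
rewrite -subr_ge0.
have -> : (x * x ^+ j * (x ^+ s.+2 - 1) / (x ^+ L.+1 - 1)) ^+ 2
    - x ^+ j * (x ^+ s.+4 - 1) / (x ^+ L.+2 - 1)
      * (x * (x * x ^+ j) * (x ^+ s - 1) / (x ^+ L - 1))
  = (x * x ^+ j) ^+ 2
    * ((x ^+ s.+2 - 1) ^+ 2 * ((x ^+ L.+2 - 1) * (x ^+ L - 1))
       - (x ^+ s.+4 - 1) * (x ^+ s - 1) * (x ^+ L.+1 - 1) ^+ 2)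
    / ((x ^+ L.+1 - 1) ^+ 2 * ((x ^+ L.+2 - 1) * (x ^+ L - 1))).
  by field; rewrite (gt_eqF fL0) (gt_eqF fL1) (gt_eqF fL2).
apply: divr_ge0; first by rewrite mulr_ge0 ?sqr_ge0 ?subr_ge0.
exact: mulr_ge0 (sqr_ge0 _) (mulr_ge0 (ltW fL2) (ltW fL0)).
Qed.

End GrassmannRatio.

Lemma grass_multE q n i : (1 < q)%N -> (i <= n)%N ->
  grass_mult q n i = gauss_binom q n i * grass_ratio (q%:R : rat) n i.
Proof.
move=> q_gt1; have x_gt1 : 1 < (q%:R : rat) by rewrite ltr1n.
case: i => [_|j le_jn].
  by rewrite /grass_mult /grass_ratio /gauss_binom big_ord0 subrr mul0r !subr0.
rewrite /grass_mult /grass_ratio gauss_binomS subnSK //.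
have nz_j : (q%:R : rat) ^+ j.+1 - 1 != 0 by rewrite gt_eqF ?expm1_gt0.
have nz_n : (q%:R : rat) ^+ (n - j) - 1 != 0.
  by rewrite -subnSK // gt_eqF ?expm1_gt0.
by field; rewrite nz_j nz_n.
Qed.

Theorem theorem6 (q n d : nat) :
  prime_power q -> (0 < n)%N -> (0 < d)%N -> (d.*2 < n.+1)%N ->
  forall i : nat, (1 <= i)%N -> (i <= d.-1)%N ->
    grass_mult q n i.-1 * grass_mult q n i.+1 <= grass_mult q n i ^+ 2.
Proof.
move=> [p [k [p_prime [k_gt0 q_eq]]]] _ _ lt_dn i i_gt0 le_id.
have q_gt1 : (1 < q)%N.
  rewrite q_eq; apply: leq_trans (prime_gt1 p_prime) _.
  by rewrite -[X in (X <= _)%N]expn1 leq_exp2l ?prime_gt1.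
have lt_in : (i.*2 < n)%N by lia.
have x_gt1 : 1 < (q%:R : rat) by rewrite ltr1n.
rewrite !grass_multE //; try lia.
apply: (@log_concave_atM _ (gauss_binom q n) (grass_ratio q%:R n)).
- by apply: mulr_ge0; apply: gauss_binom_ge0; exact: ltnW.
- by apply: mulr_ge0; apply: grass_ratio_ge0 => //; lia.
- exact: gauss_binom_log_concave.
- exact: grass_ratio_log_concave.
Qed.
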